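(* For all sufficiently large $\alpha$, every error-free uncertain priors coding scheme $(E,D)$ (possibly using the shared random string) has, for some pair $(P,Q)\in\mathcal{F}_\alpha$, expected codeword length $\mathbb{E}_{x\sim P,R}[|E(x,\alpha,R,P)|]\geq 2\log k-2\log\log k$, where $k$ is as in the definition of $\mathcal{F}_\alpha$.
   Context: All logarithms are base 2. For $\alpha\geq1$, $P,Q\in\Delta(M)$ are $\alpha$-close if $\frac{1}{\alpha}Q(x)\leq P(x)\leq\alpha Q(x)$ for all $x\in M$. An error-free uncertain priors coding scheme is a pair $E:M\times\mathbb{N}\times\{0,1\}^{\mathbb{N}}\times\Delta(M)\to\{0,1\}^*$, $D:\{0,1\}^*\times\mathbb{N}\times\{0,1\}^{\mathbb{N}}\times\Delta(M)\to M$ such that for every $x\in M$, $\alpha\in\mathbb{N}$, $R\in\{0,1\}^{\mathbb{N}}$, $P\in\Delta(M)$ and every $Q$ $\alpha$-close to $P$, $D(E(x,\alpha,R,P),\alpha,R,Q)=x$; $R$ is uniformly random in expectations. The family $\mathcal{F}_\alpha$: let $k$ be the largest integer with $k\sqrt{\log k}\leq\alpha$, and let $M$ be a message set of size $k^2+1$. For each $m\in M$ and $S\subseteq M$ with $|S|=k+1$, $m\in S$, define $P_{m,S}(m)=1-1/\log k$, $P_{m,S}(x)=1/(k^2\log k)$ for $x\neq m$; $Q_S(x)=1/(k\sqrt{\log k})$ for $x\in S$ and $Q_S(x)=\frac{1}{k^2-k}\left(1-\frac{k+1}{k\sqrt{\log k}}\right)$ for $x\notin S$. $\mathcal{F}_\alpha$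 is the set of all pairs $(P_{m,S},Q_S)$; for sufficiently large $\alpha$ each such pair is $\alpha$-close. *)

From Stdlib Require Import Reals.
From mathcomp Require Import all_boot.
Set Implicit Arguments. Unset Strict Implicit. Unset Printing Implicit Defensive.

Local Open Scope R_scope.

Definition log2 (x : R) : R := ln x / ln 2.

Definition rsum (N : nat) (f : 'I_N -> R) : R := \big[Rplus/0]_(x : 'I_N) f x.

Definition is_dist (N : nat) (P : 'I_N -> R) : Prop :=
  (forall x, 0 <= P x) /\ rsum P = 1.

Definition close (N : nat) (a : R) (P Q : 'I_N -> R) : Prop :=
  forall x, / a * Q x <= P x /\ P x <= a * Q x.

(** Shared random strings are R : nat -> bool (an element of {0,1}^N). *)
Definition encoder (N : nat) :=
  'I_N -> nat -> (nat -> bool) -> ('I_N -> R) -> seq bool.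
Definition decoder (N : nat) :=
  seq bool -> nat -> (nat -> bool) -> ('I_N -> R) -> 'I_N.

(** Error-free uncertain priors coding scheme (alpha ranges over naturals
    alpha >= 1, the range where alpha-closeness is defined). *)
Definition error_free (N : nat) (E : encoder N) (D : decoder N) : Prop :=
  forall (x : 'I_N) (a : nat) (rnd : nat -> bool) (P Q : 'I_N -> R),
    (1 <= a)%nat -> is_dist P -> is_dist Q -> close (INR a) P Q ->
    D (E x a rnd P) a rnd Q = x.

(** Uniform (coin-flipping) measure on {0,1}^N, as the outer measure
    inf { sum_i 2^-|w_i| : the cylinders [w_i] cover A }. *)
Definition cyl (w : seq bool) (r : nat -> bool) : Prop :=
  forall i, (i < size w)%nat -> nth false w i = r i.

Definition covers (c : nat -> option (seq bool)) (A : (nat -> bool) -> Prop) : Prop :=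
  forall r, A r -> exists i w, c i = Some w /\ cyl w r.

Definition cover_wt (c : nat -> option (seq bool)) (i : nat) : R :=
  match c i with Some w => (/ 2) ^ (size w) | None => 0 end.

(** prob_ge A t  <->  Pr_R[A] >= t  (every cylinder cover has weight >= t;
    covers of infinite weight are irrelevant). *)
Definition prob_ge (A : (nat -> bool) -> Prop) (t : R) : Prop :=
  forall c s, covers c A -> infinite_sum (cover_wt c) s -> t <= s.

(** exp_len_ge L P b  <->  E_{x~P, R}[ L x R ] >= b, where the expectation of
    the nat-valued L x is  sum_{n>=0} Pr_R[ L x R > n ]  (possibly +infinity):
    b is below every upper bound of the finite partial sums
    sum_x P x * sum_{n < n0} t x n, with t x n <= Pr_R[L x R > n]. *)
Definition exp_len_ge (N : nat) (L : 'I_N -> (nat -> bool) -> nat)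
    (P : 'I_N -> R) (b : R) : Prop :=
  forall ub : R,
    (forall (n0 : nat) (t : 'I_N -> nat -> R),
        (forall x n, prob_ge (fun r => (n < L x r)%nat) (t x n)) ->
        rsum (fun x => P x * \big[Rplus/0]_(n < n0) t x n) <= ub) ->
    b <= ub.

Definition is_k (a k : nat) : Prop :=
  INR k * sqrt (log2 (INR k)) <= INR a /\
  forall k' : nat, INR k' * sqrt (log2 (INR k')) <= INR a -> (k' <= k)%nat.

Definition P_mS (k : nat) (N : nat) (m : 'I_N) (S : {set 'I_N}) (x : 'I_N) : R :=
  if x == m then 1 - / log2 (INR k)
  else / (INR k ^ 2 * log2 (INR k)).

Definition Q_S (k : nat) (N : nat) (S : {set 'I_N}) (x : 'I_N) : R :=
  if x \in S then / (INR k * sqrt (log2 (INR k)))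
  else / (INR k ^ 2 - INR k) * (1 - INR (k + 1) / (INR k * sqrt (log2 (INR k)))).

Definition in_family (k : nat) (P Q : 'I_(k ^ 2 + 1) -> R) : Prop :=
  exists (m : 'I_(k ^ 2 + 1)) (S : {set 'I_(k ^ 2 + 1)}),
    m \in S /\ #|S| = k.+1 /\ P = P_mS k m S /\ Q = Q_S k S.
Arguments in_family k P Q : clear implicits.
Arguments P_mS k {N} m S x.
Arguments Q_S k {N} S x.

From Stdlib Require Import Reals Lra Lia Classical ClassicalEpsilon.
From HB Require Import structures.
From mathcomp Require Import all_boot zify.

(** Write P_m for P_{m,S} (it does not depend on S) and N = k^2 + 1.
   1. Injectivity: two messages lie in a common (k+1)-set S, and Q_S is
      alpha-close to both priors, so for each random string r the code
      m |-> E(m, alpha, r, P_m) is injective.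
   2. Counting: fewer than 2^(n+1) messages get codewords of length <= n, so
      every r lies in at least N - 2^(n+1) of the events [|E(m,r)| > n], and
      the coin-flipping outer measures of these events add up to at least
      N - 2^(n+1).  This "multiple cover" bound reduces countable cylinder
      covers to finite ones (König's lemma) and then double-counts bit strings.
   3. Averaging over n < n0 = 2 floor(log k) and over m gives a message mm with
      sum_(n < n0) Pr[|E(mm,r)| > n] >= n0 - 2 >= 2 log k - 4; since
      P_mm(mm) = 1 - 1/log k, the expected length under P_mm is at least
      (1 - 1/log k)(2 log k - 4) >= 2 log k - 2 log log k when k >= 256.
   The file follows this order: real sums, cylinder covers and the outer
   measure, counting and averaging, the family F_alpha, the main theorem. *)

Set Implicit Arguments. Unset Strict Implicit. Unset Printing Implicit Defensive.

HB.instance Definition _ :=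
  Monoid.isComLaw.Build R R0 Rplus
    (fun a b c => esym (Rplus_assoc a b c)) Rplus_comm Rplus_0_l.

Section RealSums.
Local Open Scope R_scope.

Lemma Rsum_le (I : Type) (r : seq I) (P : pred I) (F1 F2 : I -> R) :
  (forall i, P i -> F1 i <= F2 i) ->
  \big[Rplus/0]_(i <- r | P i) F1 i <= \big[Rplus/0]_(i <- r | P i) F2 i.
Proof. by move=> H; apply: (big_ind2 (fun x y => x <= y)) => //; intros; lra. Qed.

Lemma INR_sum (I : Type) (r : seq I) (P : pred I) (F : I -> nat) :
  INR (\sum_(i <- r | P i) F i) = \big[Rplus/0]_(i <- r | P i) INR (F i).
Proof. by apply: (big_morph INR) => //; exact: plus_INR. Qed.

Lemma Rsum_scal (I : Type) (r : seq I) (P : pred I) (F : I -> R) c :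
  c * \big[Rplus/0]_(i <- r | P i) F i = \big[Rplus/0]_(i <- r | P i) (c * F i).
Proof. by apply: (big_morph (fun x => c * x)); [move=> ? ? /=; ring | ring]. Qed.

Lemma iter_Rplus n c : iter n (Rplus c) 0 = INR n * c.
Proof. by elim: n => [|n IH]; [rewrite /=; ring | rewrite iterS IH S_INR; ring]. Qed.

Lemma Rsum_const_ord N c : \big[Rplus/0]_(i < N) c = INR N * c.
Proof. by rewrite big_const_ord iter_Rplus. Qed.

Lemma rsum_if N (S : {set 'I_N}) u v :
  rsum (fun x => if x \in S then u else v) = INR #|S| * u + INR (N - #|S|) * v.
Proof.
rewrite /rsum (bigID (mem S)) /=.
rewrite (eq_bigr (fun _ => u)) => [|x Hx]; last by rewrite Hx.
rewrite [X in _ + X](eq_bigr (fun _ => v)) => [|x /negbTE ->] //.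
rewrite !big_const !iter_Rplus; congr (INR _ * _ + INR _ * _).
have -> : #|[pred x | x \notin S]| = #|~: S| by apply: eq_card => x; rewrite !inE.
by have := cardsC S; rewrite card_ord; move: #|~: S| #|S| => c s; lia.
Qed.

Lemma INR_expn x n : INR (x ^ n)%N = INR x ^ n.
Proof. by elim: n => //= n IH; rewrite expnS mult_INR IH /=; ring. Qed.

Lemma INR_expn2 n : INR (2 ^ n)%N = 2 ^ n.
Proof. by rewrite INR_expn. Qed.

Lemma exists_above_mean N (V : 'I_N -> R) c :
  (0 < N)%N -> INR N * c <= \big[Rplus/0]_(m < N) V m -> exists m, c <= V m.
Proof.
move=> HN Hsum; apply: NNPP => Hno.
have Hlt : forall m, V m < c by move=> m; apply: Rnot_le_lt => H; apply: Hno; exists m.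
pose m0 : 'I_N := Ordinal HN.
move: Hsum; rewrite -Rsum_const_ord (bigD1 m0) //= [X in _ <= X](bigD1 m0) //=.
set SC := \big[Rplus/0]_(i < N | _) c; set SV := \big[Rplus/0]_(i < N | _) V i.
have : SV <= SC by apply: Rsum_le => m _; have := Hlt m; lra.
by have := Hlt m0; lra.
Qed.

Lemma partial_sum_le_series (f : nat -> R) s M :
  (forall i, 0 <= f i) -> infinite_sum f s -> \big[Rplus/0]_(i < M) f i <= s.
Proof.
move=> f0 Hs; have Hpart := fun n => @sum_incr f n s Hs f0.
case: M => [|M]; first by rewrite big_ord0; have := Hpart 0%N; have := f0 0%N; simpl; lra.
suff -> : \big[Rplus/0]_(i < M.+1) f i = sum_f_R0 f M by apply: Hpart.
elim: M => [|M IH]; first by rewrite big_ord_recr big_ord0 /=; ring.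
by rewrite big_ord_recr IH.
Qed.

End RealSums.

(** For N covers c j, the multiplicity of a
    random string r counts the covers hitting r within their first M
    cylinders; by compactness (König's lemma) finitely many cylinders suffice
    to realise any multiplicity attained by the full covers. *)

Definition cylb (w : seq bool) (r : nat -> bool) : bool := w == mkseq r (size w).

Lemma cylP w r : reflect (cyl w r) (cylb w r).
Proof.
apply: (iffP eqP) => [Ew i Hi|H]; first by rewrite Ew nth_mkseq.
apply: (eq_from_nth (x0 := false)); first by rewrite size_mkseq.
by move=> i Hi; rewrite nth_mkseq // H.
Qed.

Definition hits (c : nat -> option (seq bool)) M (r : nat -> bool) : bool :=
  [exists i : 'I_M, if c i is Some w then cylb w r else false].

Definition multiplicity N (c : 'I_N -> nat -> option (seq bool)) M r : nat :=
  #|[set j | hits (c j) M r]|.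

Lemma multiplicity_mono N (c : 'I_N -> nat -> option (seq bool)) M M' r :
  (M <= M')%N -> (multiplicity c M r <= multiplicity c M' r)%N.
Proof.
move=> HM; apply: subset_leq_card; apply/subsetP => j; rewrite !inE.
by case/existsP => i Hi; apply/existsP; exists (widen_ord HM i).
Qed.

Lemma finite_uniform_bound (T : finType) (P : T -> nat -> Prop) :
  (forall t n n', P t n -> (n <= n')%N -> P t n') ->
  (forall t, exists n, P t n) -> exists n, forall t, P t n.
Proof.
move=> Pmono H.
pose f t := proj1_sig (constructive_indefinite_description _ (H t)).
exists (\max_t f t) => t; apply: (Pmono t (f t)); last exact: leq_bigmax.
exact: (proj2_sig (constructive_indefinite_description _ (H t))).
Qed.

Lemma cylinder_length_bound N (c : 'I_N -> nat -> option (seq bool)) M :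
  exists D, forall j i w, (i < M)%N -> c j i = Some w -> (size w <= D)%N.
Proof.
have [D HD] : exists D, forall (t : 'I_N * 'I_M) w,
    c t.1 t.2 = Some w -> (size w <= D)%N.
  apply: finite_uniform_bound => [t n n' H Hn w Ew|t].
    exact: leq_trans (H w Ew) Hn.
  case Ew: (c t.1 t.2) => [w|]; last by exists 0%N.
  by exists (size w) => w'; case=> <-.
by exists D => j i w Hi Ew; exact: (HD (j, Ordinal Hi) w Ew).
Qed.

Lemma multiplicity_prefix N (c : 'I_N -> nat -> option (seq bool)) M D :
  (forall j i w, (i < M)%N -> c j i = Some w -> (size w <= D)%N) ->
  forall r r', (forall i, (i < D)%N -> r i = r' i) ->
  multiplicity c M r = multiplicity c M r'.
Proof.
move=> HD r r' Hr; apply: eq_card => j; rewrite !inE.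
apply: eq_existsb => i; case Ew: (c j i) => [w|] //.
rewrite /cylb /mkseq; congr (_ == _); apply/eq_in_map => x.
rewrite mem_iota => /andP[_ Hx]; apply: Hr.
have := HD j i w (ltn_ord i) Ew; lia.
Qed.

(** König's lemma: if every finite truncation of the covers leaves some r
    with multiplicity < G, the set of prefixes admitting such an r for every
    truncation contains an infinite branch. *)
Section Koenig.
Variables (N : nat) (c : 'I_N -> nat -> option (seq bool)) (G : nat).

Definition bad (p : seq bool) : Prop := forall M, exists r,
  (forall i, (i < size p)%N -> r i = nth false p i) /\ (multiplicity c M r < G)%N.

Lemma bad_extend p : bad p -> bad (rcons p false) \/ bad (rcons p true).
Proof.
move=> Hp; apply: NNPP => /not_or_and [H0 H1].
move/not_all_ex_not: H0 => [M0 H0]; move/not_all_ex_not: H1 => [M1 H1].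
have [r [Hr Hf]] := Hp (maxn M0 M1).
have ext b : r (size p) = b ->
    forall i, (i < size (rcons p b))%N -> r i = nth false (rcons p b) i.
  move=> Hb i; rewrite size_rcons nth_rcons ltnS leq_eqVlt.
  by case/orP => [/eqP ->|Hi]; [rewrite ltnn eqxx | rewrite Hi; apply: Hr].
case Eb: (r (size p)); [apply: H1 | apply: H0]; exists r; split; try exact: ext.
  by apply: leq_ltn_trans Hf; apply: multiplicity_mono; exact: leq_maxr.
by apply: leq_ltn_trans Hf; apply: multiplicity_mono; exact: leq_maxl.
Qed.

Definition bad_step (p : seq bool) : seq bool :=
  if excluded_middle_informative (bad (rcons p false)) then rcons p false
  else rcons p true.

Lemma bad_step_bad p : bad p -> bad (bad_step p).
Proof.
rewrite /bad_step => Hp; case: excluded_middle_informative => // Hn.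
by case: (bad_extend Hp).
Qed.

Definition branch n : seq bool := iter n bad_step [::].

Lemma size_branch n : size (branch n) = n.
Proof.
elim: n => //= n IH; rewrite /bad_step.
by case: excluded_middle_informative => ?; rewrite size_rcons IH.
Qed.

Lemma branch_stable n d i :
  (i < n)%N -> nth false (branch (n + d)) i = nth false (branch n) i.
Proof.
move=> Hi; elim: d => [|d IH]; first by rewrite addn0.
rewrite addnS /= /bad_step; case: excluded_middle_informative => ?;
by rewrite nth_rcons size_branch (leq_trans Hi (leq_addr _ _)) IH.
Qed.

End Koenig.

Lemma finite_subcover N (c : 'I_N -> nat -> option (seq bool))
    (a : 'I_N -> (nat -> bool) -> bool) G :
  (forall j, covers (c j) (fun r => a j r)) ->
  (forall r, (G <= #|[set j | a j r]|)%N) ->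
  exists M, forall r, (G <= multiplicity c M r)%N.
Proof.
move=> Hcov HG; apply: NNPP => Hno.
have Hbad0 : bad c G [::].
  move=> M; apply: NNPP => H; apply: Hno; exists M => r.
  by rewrite leqNgt; apply/negP => Hlt; apply: H; exists r.
have Hbad n : bad c G (branch c G n) by elim: n => //= n IH; exact: bad_step_bad.
pose r i := nth false (branch c G i.+1) i.
have Hr n i : (i < n)%N -> r i = nth false (branch c G n) i.
  move=> Hi; rewrite /r; have := branch_stable c G (n - i.+1) (ltnSn i).
  by rewrite (subnKC Hi) => <-.
have [M HM] : exists M, forall j, a j r -> hits (c j) M r.
  apply: finite_uniform_bound => [j n n' H Hn Ha|j].
    by case/existsP: (H Ha) => i Hi; apply/existsP; exists (widen_ord Hn i).
  case Ha: (a j r); last by exists 0%N.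
  have [i [w [Ei Hw]]] := Hcov j r Ha.
  exists i.+1 => _; apply/existsP; exists (Ordinal (ltnSn i)).
  by rewrite /= Ei; exact/cylP.
have HGr : (G <= multiplicity c M r)%N.
  apply: leq_trans (HG r) _; apply: subset_leq_card; apply/subsetP => j.
  by rewrite !inE; exact: HM.
have [D HD] := cylinder_length_bound c M.
have [r' [Hr' Hf']] := Hbad D M.
have Er : multiplicity c M r = multiplicity c M r'.
  apply: (multiplicity_prefix HD) => i Hi.
  by rewrite Hr' ?size_branch //; exact: Hr.
by rewrite Er leqNgt Hf' in HGr.
Qed.

(** Double counting over the 2^D bit strings of length D: a cylinder of length
   |w| <= D contains 2^(D - |w|) of them, i.e. a fraction 2^-|w|. *)

Fixpoint all_seqs n : seq (seq bool) :=
  if n is n'.+1 then map (cons false) (all_seqs n') ++ map (cons true) (all_seqs n')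
  else [:: [::]].

Lemma size_all_seqs n : size (all_seqs n) = (2 ^ n)%N.
Proof. by elim: n => //= n IH; rewrite size_cat !size_map IH expnS; lia. Qed.

Lemma all_seqs_size n p : p \in all_seqs n -> size p = n.
Proof.
elim: n p => [|n IH] p /=; first by rewrite inE => /eqP ->.
by rewrite mem_cat => /orP[] /mapP [q Hq ->] /=; rewrite IH.
Qed.

Lemma count_prefix D w : (size w <= D)%N ->
  count (fun p => take (size w) p == w) (all_seqs D) = (2 ^ (D - size w))%N.
Proof.
elim: D w => [|D IH] [|b w] Hw //.
  rewrite subn0 -size_all_seqs -[size (all_seqs _)]count_predT.
  by apply: eq_count => p; rewrite take0.
rewrite /= count_cat !count_map /= subSS.
have Eb b' : count (preim (cons b') (fun p => take (size w).+1 p == b :: w))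
    (all_seqs D) = if b' == b then (2 ^ (D - size w))%N else 0%N.
  rewrite -(IH w) //; case: (eqVneq b' b) => [->|ne].
    by apply: eq_count => p /=; rewrite eqseq_cons eqxx.
  by elim: (all_seqs D) => //= q s ->; rewrite eqseq_cons (negbTE ne).
by rewrite !Eb; case: b {Hw Eb} => /=; lia.
Qed.

Lemma cylinder_count D w : (size w <= D)%N ->
  count (fun p => cylb w (fun i => nth false p i)) (all_seqs D) = (2 ^ (D - size w))%N.
Proof.
move=> Hw; rewrite -(count_prefix Hw); apply: eq_in_count => p /all_seqs_size Hp.
rewrite /cylb eq_sym; congr (_ == _).
apply: (eq_from_nth (x0 := false)); first by rewrite size_mkseq size_takel ?Hp.
by move=> i; rewrite size_mkseq => Hi; rewrite nth_mkseq // nth_take.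
Qed.

Section FiniteCover.
Local Open Scope R_scope.

Lemma cover_wt_ge0 c i : 0 <= cover_wt c i.
Proof. by rewrite /cover_wt; case: (c i) => [w|]; [apply: pow_le; lra | lra]. Qed.

Lemma finite_cover_weight N (c : 'I_N -> nat -> option (seq bool)) M D G :
  (forall j i w, (i < M)%N -> c j i = Some w -> (size w <= D)%N) ->
  (forall r, (G <= multiplicity c M r)%N) ->
  INR G <= \big[Rplus/0]_(j < N) \big[Rplus/0]_(i < M) cover_wt (c j) i.
Proof.
move=> HD HG.
pose ind j (i : 'I_M) (p : seq bool) : nat :=
  if c j i is Some w then cylb w (fun i => nth false p i) else false.
have Hmult p : p \in all_seqs D -> (G <= \sum_j \sum_(i < M) ind j i p)%N.
  move=> Hp; apply: leq_trans (HG (fun i => nth false p i)) _.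
  rewrite /multiplicity -sum1_card big_mkcond /=; apply: leq_sum => j _.
  rewrite inE; case: ifP => // /existsP [i Hi]; rewrite (bigD1 i) //= /ind.
  by move: Hi; case: (c j i) => [w|] // ->.
have Hcyl j (i : 'I_M) : (\sum_(p <- all_seqs D) ind j i p)%N =
    if c j i is Some w then (2 ^ (D - size w))%N else 0%N.
  rewrite /ind; case Ew: (c j i) => [w|]; last by rewrite big1.
  rewrite -cylinder_count; last exact: (HD j i w (ltn_ord i) Ew).
  by rewrite -sum1_count [RHS]big_mkcond; apply: eq_bigr => p _; case: cylb.
have Hdouble : (G * 2 ^ D <= \sum_j \sum_(i < M) \sum_(p <- all_seqs D) ind j i p)%N.
  rewrite -size_all_seqs -iter_addn_0 -count_predT -big_const_seq.
  apply: (@leq_trans (\sum_(p <- all_seqs D) \sum_j \sum_(i < M) ind j i p)).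
    by rewrite big_seq_cond [X in (_ <= X)%N]big_seq_cond; apply: leq_sum => p /andP[Hp _]; exact: Hmult.
  by rewrite exchange_big; apply: eq_leq; apply: eq_bigr => j _; exact: exchange_big.
have Ew : INR (\sum_j \sum_(i < M) \sum_(p <- all_seqs D) ind j i p)%N =
    2 ^ D * \big[Rplus/0]_(j < N) \big[Rplus/0]_(i < M) cover_wt (c j) i.
  rewrite INR_sum Rsum_scal; apply: eq_bigr => j _.
  rewrite INR_sum Rsum_scal; apply: eq_bigr => i _.
  rewrite Hcyl /cover_wt; case Ew: (c j i) => [w|]; last by simpl; ring.
  have Hs := HD j i w (ltn_ord i) Ew.
  rewrite INR_expn2 -{2}(subnK Hs) pow_add Rmult_assoc -Rpow_mult_distr Rinv_r; last lra.
  by rewrite pow1; ring.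
have := le_INR _ _ (elimT leP Hdouble); rewrite Ew mult_INR INR_expn2.
have Hp : 0 < 2 ^ D by apply: pow_lt; lra.
by move=> H; apply: (Rmult_le_reg_r (2 ^ D)) => //; lra.
Qed.

Lemma multiple_cover_weight N (c : 'I_N -> nat -> option (seq bool))
    (a : 'I_N -> (nat -> bool) -> bool) G (s : 'I_N -> R) :
  (forall j, covers (c j) (fun r => a j r)) ->
  (forall j, infinite_sum (cover_wt (c j)) (s j)) ->
  (forall r, (G <= #|[set j | a j r]|)%N) ->
  INR G <= \big[Rplus/0]_(j < N) s j.
Proof.
move=> Hcov Hs HG.
have [M HM] := finite_subcover Hcov HG.
have [D HD] := cylinder_length_bound c M.
apply: Rle_trans (finite_cover_weight HD HM) _.
apply: Rsum_le => j _; apply: partial_sum_le_series (Hs j) => i.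
exact: cover_wt_ge0.
Qed.

End FiniteCover.

Section OuterMeasure.
Local Open Scope R_scope.

Lemma prob_ge0 A : prob_ge A 0.
Proof.
move=> c s _ Hs; have := @sum_incr _ 0%N s Hs (@cover_wt_ge0 c).
by have := cover_wt_ge0 c 0; simpl; lra.
Qed.

Definition trivial_cover (i : nat) : option (seq bool) :=
  if i is 0%N then Some [::] else None.

Lemma trivial_cover_covers A : covers trivial_cover A.
Proof. by move=> r _; exists 0%N, [::]; split => // i. Qed.

Lemma trivial_cover_weight : infinite_sum (cover_wt trivial_cover) 1.
Proof.
have H n : sum_f_R0 (cover_wt trivial_cover) n = 1.
  by elim: n => [|n IH] /=; rewrite ?IH /cover_wt /=; ring.
by move=> e He; exists 0%N => n _; rewrite H /Rdist Rminus_diag Rabs_R0; lra.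
Qed.

Lemma prob_ge_bounded A : bound (fun t => prob_ge A t).
Proof.
exists 1 => t Ht.
exact: (Ht trivial_cover 1 (@trivial_cover_covers A) trivial_cover_weight).
Qed.

Definition omeas A : R :=
  proj1_sig (completeness _ (@prob_ge_bounded A) (ex_intro _ 0 (@prob_ge0 A))).

Lemma omeas_lub A : is_lub (fun t => prob_ge A t) (omeas A).
Proof. exact: proj2_sig (completeness _ (@prob_ge_bounded A) (ex_intro _ 0 (@prob_ge0 A))). Qed.

Lemma omeas_ge A : prob_ge A (omeas A).
Proof.
move=> c s Hc Hs; have [_ H] := omeas_lub A.
by apply: H => t Ht; exact: Ht c s Hc Hs.
Qed.

Lemma omeas_approx A d : 0 < d -> exists cs : (nat -> option (seq bool)) * R,
  covers cs.1 A /\ infinite_sum (cover_wt cs.1) cs.2 /\ cs.2 < omeas A + d.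
Proof.
move=> Hd; apply: NNPP => H.
have Hp : prob_ge A (omeas A + d).
  move=> c s Hc Hs; apply: Rnot_lt_le => Hlt; apply: H; by exists (c, s).
by have [H1 _] := omeas_lub A; have := H1 _ Hp; lra.
Qed.

Lemma omeas_multiple_cover N (a : 'I_N -> (nat -> bool) -> bool) G :
  (forall r, (G <= #|[set j | a j r]|)%N) ->
  INR G <= \big[Rplus/0]_(j < N) omeas (fun r => a j r).
Proof.
move=> HG; set S := \big[Rplus/0]_(j < N) _.
apply: Rnot_lt_le => Hlt.
have HN : 0 <= INR N by apply: pos_INR.
pose d := (INR G - S) / (INR N + 1).
have Hd : d * (INR N + 1) = INR G - S by rewrite /d; field; lra.
have Hd0 : 0 < d by rewrite /d; apply: Rdiv_lt_0_compat; lra.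
have Hcs j := @omeas_approx (fun r => a j r) d Hd0.
pose cs j := proj1_sig (constructive_indefinite_description _ (Hcs j)).
have Hf j := proj2_sig (constructive_indefinite_description _ (Hcs j)).
have Hweight := @multiple_cover_weight N (fun j => (cs j).1) a G (fun j => (cs j).2)
   (fun j => proj1 (Hf j)) (fun j => proj1 (proj2 (Hf j))) HG.
have : \big[Rplus/0]_(j < N) (cs j).2 <= \big[Rplus/0]_(j < N) (omeas (fun r => a j r) + d).
  by apply: Rsum_le => j _; have := proj2 (proj2 (Hf j)); rewrite /cs; lra.
rewrite big_split /= -/S Rsum_const_ord => H.
by have := Rle_trans _ _ _ Hweight H; lra.
Qed.

End OuterMeasure.

Fixpoint all_short n : seq (seq bool) :=
  if n is n'.+1 then
    [::] :: (map (cons false) (all_short n') ++ map (cons true) (all_short n'))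
  else [:: [::]].

Lemma size_all_short n : (size (all_short n) < 2 ^ n.+1)%N.
Proof. by elim: n => [|n IH] //=; rewrite size_cat !size_map; have := expnS 2 n.+1; lia. Qed.

Lemma mem_all_short n p : (size p <= n)%N -> p \in all_short n.
Proof.
elim: n p => [|n IH] [|b p] //= Hp.
rewrite inE mem_cat; apply/orP; right.
by case: b; apply/orP; [right | left]; apply: map_f; apply: IH.
Qed.

Lemma injective_long_words N (w : 'I_N -> seq bool) n : injective w ->
  (N <= #|[set m | (n < size (w m))%N]| + 2 ^ n.+1)%N.
Proof.
move=> Hw; rewrite -{1}(card_ord N) -(cardsC [set m | (n < size (w m))%N]) leq_add2l.
apply: ltnW; apply: leq_ltn_trans (size_all_short n).
rewrite cardE -(size_map w); apply: uniq_leq_size.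
  by rewrite (map_inj_uniq Hw) enum_uniq.
move=> x /mapP [m]; rewrite mem_enum !inE -leqNgt => Hm ->.
exact: mem_all_short.
Qed.

Lemma extend_set N (A : {set 'I_N}) n : (#|A| <= n)%N -> (n <= N)%N ->
  exists S : {set 'I_N}, A \subset S /\ #|S| = n.
Proof.
move=> H1 H2; move: {2}(n - #|A|)%N (erefl (n - #|A|)%N) => d.
elim: d A H1 => [|d IH] A H1 Hd; first by exists A; split => //; lia.
have : (0 < #|~: A|)%N by have := cardsC A; rewrite card_ord; lia.
case/card_gt0P => x; rewrite in_setC => Hx.
have Hc : #|x |: A| = #|A|.+1 by rewrite cardsU1 Hx.
have [S [HS1 HS2]] := IH (x |: A) ltac:(lia) ltac:(lia).
by exists S; split => //; apply: subset_trans HS1; exact: subsetUr.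
Qed.

Lemma sum_gap N K : (2 ^ K <= N)%N ->
  (K * N <= \sum_(n < K) (N - 2 ^ n.+1) + 2 ^ K.+1)%N.
Proof.
elim: K => [|K IH] H; first by rewrite big_ord0.
rewrite big_ord_recr /=.
have E1 := expnS 2 K; have E2 := expnS 2 K.+1.
move: (IH ltac:(lia)); rewrite mulSn.
by move: (\sum_(i < K) (N - 2 ^ i.+1)) => s; lia.
Qed.

Section LongCodewords.
Local Open Scope R_scope.

Lemma long_codeword_message N (w : 'I_N -> (nat -> bool) -> seq bool) n0 :
  (0 < N)%N -> (2 ^ n0 <= N)%N -> (forall r, injective (w ^~ r)) ->
  exists mm, INR n0 - 2 <=
    \big[Rplus/0]_(n < n0) omeas (fun r => (n < size (w mm r))%N).
Proof.
move=> HN Hn0 Hinj; apply: exists_above_mean => //.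
have Hlevel n : INR (N - 2 ^ n.+1) <=
    \big[Rplus/0]_(m < N) omeas (fun r => (n < size (w m r))%N).
  apply: (@omeas_multiple_cover _ (fun m r => (n < size (w m r))%N)) => r.
  by have := injective_long_words n (Hinj r); lia.
have Hgap : (n0 * N <= \sum_(n < n0) (N - 2 ^ n.+1) + 2 * N)%N.
  by have := sum_gap Hn0; have := expnS 2 n0; lia.
have Hsum : \big[Rplus/0]_(n < n0) INR (N - 2 ^ n.+1) <=
    \big[Rplus/0]_(n < n0) \big[Rplus/0]_(m < N) omeas (fun r => (n < size (w m r))%N).
  by apply: Rsum_le => n _; exact: Hlevel.
have := le_INR _ _ (elimT leP Hgap).
rewrite exchange_big /= plus_INR !mult_INR INR_sum [INR 2]/= => HgapR.
apply: Rle_trans _ Hsum; move: HgapR.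
by move: (\big[Rplus/0]_(n < n0) INR _) => s; lra.
Qed.

End LongCodewords.

Section Coding.
Local Open Scope R_scope.

(** If any two priors P m, P m' have a common alpha-close distribution Q,
    an error-free scheme encodes the messages injectively for every fixed
    random string: the decoder holding Q must recover both m and m'. *)
Lemma error_free_injective N (E : encoder N) (D : decoder N) a
    (P : 'I_N -> 'I_N -> R) :
  error_free E D -> (1 <= a)%N -> (forall m, is_dist (P m)) ->
  (forall m m', exists Q, is_dist Q /\ close (INR a) (P m) Q /\ close (INR a) (P m') Q) ->
  forall r, injective (fun m => E m a r (P m)).
Proof.
move=> Herr Ha HP Hcommon r m m' /= Heq.
have [Q [HQ [Hm Hm']]] := Hcommon m m'.
by rewrite -(Herr m a r (P m) Q Ha (HP m) HQ Hm) Heq (Herr m' a r _ Q Ha (HP m') HQ Hm').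
Qed.

Lemma exp_len_ge_message N (L : 'I_N -> (nat -> bool) -> nat) (P : 'I_N -> R)
    mm n0 b :
  b <= P mm * \big[Rplus/0]_(n < n0) omeas (fun r => (n < L mm r)%N) ->
  exp_len_ge L P b.
Proof.
move=> Hb ub Hub.
pose t x n := if x == mm then omeas (fun r => (n < L mm r)%N) else 0.
have Ht x n : prob_ge (fun r => (n < L x r)%N) (t x n).
  by rewrite /t; case: eqP => [->|_]; [exact: omeas_ge | exact: prob_ge0].
apply: Rle_trans Hb _; apply: Rle_trans (Hub n0 t Ht).
rewrite /rsum (bigD1 mm) //= [X in _ + X]big1 => [|x Hx]; last first.
  by rewrite big1 => [|n _]; [rewrite Rmult_0_r | rewrite /t (negbTE Hx)].
by rewrite Rplus_0_r; apply: Req_le; congr (_ * _); apply: eq_bigr => n _; rewrite /t eqxx.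
Qed.

End Coding.

Section Log2.
Local Open Scope R_scope.

Lemma ln2_pos : 0 < ln 2.
Proof. by have := ln_lt_2; lra. Qed.

Lemma log2_pow2 n : log2 (2 ^ n) = INR n.
Proof. by rewrite /log2 ln_pow; last lra; field; have := ln2_pos; lra. Qed.

Lemma log2_le x y : 0 < x -> x <= y -> log2 x <= log2 y.
Proof.
move=> Hx Hxy; rewrite /log2; apply: Rmult_le_compat_r.
  by left; apply: Rinv_0_lt_compat; exact: ln2_pos.
by case: Hxy => [H|<-]; [left; exact: ln_increasing | lra].
Qed.

Lemma log2_lt x y : 0 < x -> x < y -> log2 x < log2 y.
Proof.
move=> Hx Hxy; rewrite /log2; apply: Rmult_lt_compat_r; last exact: ln_increasing.
by apply: Rinv_0_lt_compat; exact: ln2_pos.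
Qed.

Lemma log2_ge_pow2 n x : 2 ^ n <= x -> INR n <= log2 x.
Proof. by move=> H; rewrite -log2_pow2; apply: log2_le => //; apply: pow_lt; lra. Qed.

(** log2 K <= 2 (K - 1) for K >= 1, from ln K <= K - 1 and ln 2 > 1/2. *)
Lemma log2_le_linear K : 1 <= K -> log2 K <= 2 * (K - 1).
Proof.
move=> HK; have H2 := ln_lt_2; have H2' := ln2_pos.
have HlnK : ln K <= K - 1.
  case: (Req_dec K 1) => [->|ne]; first by rewrite ln_1; lra.
  have := exp_ineq1 (K - 1) ltac:(lra) => He.
  by have := ln_increasing K (exp (K - 1)) ltac:(lra) ltac:(lra); rewrite ln_exp; lra.
have HlnK0 : 0 <= ln K.
  by case: (Req_dec K 1) => [->|ne]; [rewrite ln_1; lra | rewrite -ln_1; left; apply: ln_increasing; lra].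
rewrite /log2; have : ln K / ln 2 * ln 2 = ln K by field; lra.
by nra.
Qed.

Lemma log2_lt_trunc_log k : (0 < k)%N -> log2 (INR k) < INR (trunc_log 2 k) + 1.
Proof.
move=> Hk; rewrite -S_INR -[INR (trunc_log 2 k).+1]log2_pow2; apply: log2_lt.
  by apply: lt_0_INR; apply/ltP.
by rewrite -INR_expn2; apply: lt_INR; apply/ltP; exact: trunc_log_ltn.
Qed.

End Log2.

Section Family.
Local Open Scope R_scope.
Variable k : nat.
Hypothesis Hk : 256 <= INR k.

Let K := INR k.
Let L := log2 K.
Let X := K * sqrt L.

Lemma log2k_ge8 : 8 <= L.
Proof. by have := @log2_ge_pow2 8 K; rewrite INR_IZR_INZ /=; apply; rewrite /K; lra. Qed.

Lemma sqrtL_sq : sqrt L * sqrt L = L.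
Proof. by apply: sqrt_sqrt; have := log2k_ge8; lra. Qed.

Lemma sqrtL_range : 2 <= sqrt L <= K - 1.
Proof.
have HL := log2k_ge8; have Hsq := sqrtL_sq; have Hpos := sqrt_pos L.
have HL' : L <= 2 * (K - 1) by apply: log2_le_linear; rewrite /K; lra.
have H2 : 2 <= sqrt L by nra.
by split => //; nra.
Qed.

Lemma X_range : 2 * K <= X <= K ^ 2 - K.
Proof. by have := sqrtL_range; rewrite /X /K /=; nra. Qed.

Lemma X_sq : X * X = K ^ 2 * L.
Proof. by rewrite /X; have := sqrtL_sq; move: (sqrt L) => s <-; rewrite /=; ring. Qed.

Lemma outside_mass_range : / 4 <= 1 - INR (k + 1) / X <= 1.
Proof.
have [HX _] := X_range; rewrite plus_INR INR_1 -/K.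
have HK : 256 <= K by [].
have HXp : 0 < X by lra.
have Hq : (K + 1) / X * X = K + 1 by field; lra.
have Hq0 : 0 <= (K + 1) / X by apply: Rmult_le_pos; [|left; apply: Rinv_0_lt_compat]; lra.
by split; nra.
Qed.

Lemma Pdist (m : 'I_(k ^ 2 + 1)) S : is_dist (P_mS k m S).
Proof.
have HL := log2k_ge8; have HK : 256 <= K by [].
split.
  move=> x; rewrite /P_mS -/K -/L; case: (x == m).
    by have : / L <= / 8 by [apply: Rinv_le_contravar; lra]; lra.
  by left; apply: Rinv_0_lt_compat; apply: Rmult_lt_0_compat; [apply: pow_lt|]; lra.
rewrite /rsum (eq_bigr (fun x => if x \in [set m] then 1 - / L else / (K ^ 2 * L)));
  last by move=> x _; rewrite /P_mS in_set1.
rewrite -/(rsum _) rsum_if cards1 addnK INR_expn -/K /=.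
by field; lra.
Qed.

Lemma Qdist (S : {set 'I_(k ^ 2 + 1)}) : #|S| = k.+1 -> is_dist (Q_S k S).
Proof.
move=> HS; have [HX1 HX2] := X_range; have Hq := outside_mass_range.
have HK : 256 <= K by [].
have HD : 0 < K ^ 2 - K by lra.
split.
  move=> x; rewrite /Q_S -/K -/L -/X; case: (x \in S).
    by apply: Rlt_le; apply: Rinv_0_lt_compat; lra.
  by apply: Rmult_le_pos; [apply: Rlt_le; apply: Rinv_0_lt_compat | ]; lra.
rewrite /Q_S rsum_if HS.
have -> : INR (k ^ 2 + 1 - k.+1) = K ^ 2 - K.
  have Hk2 : (k <= k ^ 2)%N.
    by rewrite expnS expn1 leq_pmulr //; apply/ltP; apply: INR_lt; simpl; lra.
  have : (k ^ 2 + 1 - k.+1 + k = k ^ 2)%N by lia.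
  by move/(f_equal INR); rewrite plus_INR INR_expn -/K => <-; ring.
by rewrite S_INR plus_INR INR_1 -/K -/L -/X; field; lra.
Qed.

Variable a : nat.
Hypothesis Ha : INR k * sqrt (log2 (INR k)) <= INR a.

Let A := INR a.

Lemma inv_A_le_inv_X : 0 < / A <= / X.
Proof.
have [HX _] := X_range; have HA : X <= A := Ha; have HK : 256 <= K by [].
by split; [apply: Rinv_0_lt_compat | apply: Rinv_le_contravar]; lra.
Qed.

Lemma one_le_A_inv_X : 1 <= A * / X.
Proof.
have [HX _] := X_range; have HA : X <= A := Ha; have HK : 256 <= K by [].
rewrite -(Rinv_r X); last lra.
by apply: Rmult_le_compat_r; [left; apply: Rinv_0_lt_compat |]; lra.
Qed.

Lemma close_center : / A * / X <= 1 - / L <= A * / X.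
Proof.
have [HX _] := X_range; have HL := log2k_ge8; have HK : 256 <= K by [].
have [HiA HiAX] := inv_A_le_inv_X; have HAX := one_le_A_inv_X.
have HiX : / X <= / 512 by apply: Rinv_le_contravar; lra.
have HiL : / L <= / 8 by apply: Rinv_le_contravar; lra.
have HiL0 : 0 < / L by apply: Rinv_0_lt_compat; lra.
by split; nra.
Qed.

Lemma close_inside : / A * / X <= / (K ^ 2 * L) <= A * / X.
Proof.
have [HX _] := X_range; have HK : 256 <= K by [].
have [HiA HiAX] := inv_A_le_inv_X; have HAX := one_le_A_inv_X.
have HiX : 0 < / X <= 1 by split; [apply: Rinv_0_lt_compat | rewrite -Rinv_1; apply: Rinv_le_contravar]; lra.
rewrite -X_sq Rinv_mult.
by split; nra.
Qed.

Lemma close_outside (q : R) : / 4 <= q <= 1 ->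
  / A * (/ (K ^ 2 - K) * q) <= / (K ^ 2 * L) <= A * (/ (K ^ 2 - K) * q).
Proof.
move=> Hq; have [HX1 HX2] := X_range; have HK : 256 <= K by [].
have [HiA HiAX] := inv_A_le_inv_X; have HA : X <= A := Ha.
have HiD : 0 < / (K ^ 2 - K) <= / X.
  by split; [apply: Rinv_0_lt_compat | apply: Rinv_le_contravar]; lra.
have HiXX : / (X * X) <= / (K ^ 2 - K).
  by apply: Rinv_le_contravar; nra.
rewrite -X_sq; split.
  by rewrite Rinv_mult; apply: Rmult_le_compat; nra.
apply: Rle_trans HiXX _; have HAq : 1 <= A * q by nra.
rewrite -Rmult_assoc (Rmult_comm A) Rmult_assoc -{1}(Rmult_1_r (/ (K ^ 2 - K))).
by apply: Rmult_le_compat_l; lra.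
Qed.

Lemma family_close N (m : 'I_N) (S : {set 'I_N}) :
  m \in S -> close A (P_mS k m S) (Q_S k S).
Proof.
move=> HmS x; rewrite /P_mS /Q_S -/K -/L -/X.
case: eqP => [->|_]; first by rewrite HmS; exact: close_center.
case: (x \in S); first exact: close_inside.
exact: close_outside outside_mass_range.
Qed.

Lemma k_pos : (0 < k)%N.
Proof. by apply/ltP; apply: INR_lt; simpl; lra. Qed.

Lemma k_succ_le : (k.+1 <= k ^ 2 + 1)%N.
Proof. by rewrite expnS expn1 addn1 ltnS leq_pmulr // k_pos. Qed.

(** Two messages always have a common alpha-close prior: Q_S for any
    (k+1)-set S containing both. *)
Lemma family_common_prior (m m' : 'I_(k ^ 2 + 1)) : exists Q,
  is_dist Q /\ close A (P_mS k m setT) Q /\ close A (P_mS k m' setT) Q.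
Proof.
have [S [HS1 HS2]] : exists S : {set 'I_(k ^ 2 + 1)}, [set m; m'] \subset S /\ #|S| = k.+1.
  by apply: extend_set k_succ_le; rewrite cards2 ltnS; exact: leq_trans (leq_b1 _) k_pos.
exists (Q_S k S); split; first exact: Qdist.
by split; apply: family_close; apply: (subsetP HS1); rewrite !inE eqxx ?orbT.
Qed.

Lemma family_member (mm : 'I_(k ^ 2 + 1)) : exists Q, in_family k (P_mS k mm setT) Q.
Proof.
have [S [HS1 HS2]] : exists S : {set 'I_(k ^ 2 + 1)}, [set mm] \subset S /\ #|S| = k.+1.
  by apply: extend_set k_succ_le; rewrite cards1.
exists (Q_S k S), mm, S; split; last by [].
by apply: (subsetP HS1); rewrite inE.
Qed.

End Family.

Section Estimates.
Local Open Scope R_scope.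

(** With a = 768 = 256 * 3 >= 256 sqrt 8, the largest admissible k is >= 256. *)
Lemma k_ge_256 a k : (768 <= a)%N -> is_k a k -> (256 <= k)%N.
Proof.
move=> Ha [_ Hmax]; apply: Hmax.
have -> : INR 256 = 2 ^ 8 by rewrite -INR_expn2.
rewrite log2_pow2 [INR 8]INR_IZR_INZ /=.
have Hs8 : sqrt 8 <= 3.
  by rewrite -(sqrt_square 3); [apply: sqrt_le_1_alt | ]; lra.
have : INR 768 <= INR a by apply: le_INR; apply/leP.
by rewrite INR_IZR_INZ /=; nra.
Qed.

Lemma pow2_double_trunc_log k : (0 < k)%N ->
  (2 ^ (trunc_log 2 k + trunc_log 2 k) <= k ^ 2 + 1)%N.
Proof.
move=> Hk; rewrite expnD; have Hj := trunc_logP (leqnn 2) Hk.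
by apply: leq_trans (leq_mul Hj Hj) _; rewrite mulnn leq_addr.
Qed.

(** (1 - 1/L)(2L - 4) >= 2L - 6 >= 2L - 2 log2 L for L >= 8. *)
Lemma final_estimate L V : 8 <= L -> 2 * L - 4 <= V ->
  2 * L - 2 * log2 L <= (1 - / L) * V.
Proof.
move=> HL HV.
have Hlog : 3 <= log2 L by have := @log2_ge_pow2 3 L; rewrite INR_IZR_INZ /=; apply; lra.
have HiL : / L <= / 8 by apply: Rinv_le_contravar; lra.
have EL : L * / L = 1 by field; lra.
have HiL0 : 0 < / L by apply: Rinv_0_lt_compat; lra.
by nra.
Qed.

End Estimates.

Local Open Scope R_scope.

Theorem mainTheorem4 :
  exists a0 : nat, forall a : nat, (a0 <= a)%nat ->
  forall k : nat, is_k a k ->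
  forall (E : encoder (k ^ 2 + 1)) (D : decoder (k ^ 2 + 1)),
    error_free E D ->
    exists P Q : 'I_(k ^ 2 + 1) -> R,
      in_family k P Q /\
      exp_len_ge (fun x r => size (E x a r P)) P
        (2 * log2 (INR k) - 2 * log2 (log2 (INR k))).
Proof.
exists 768%N => a Ha k Hk E D Herr.
have Hk256 := k_ge_256 Ha Hk.
have HK : 256 <= INR k.
  by have := le_INR _ _ (elimT leP Hk256); rewrite [INR 256]INR_IZR_INZ.
have Hinj := error_free_injective Herr (leq_trans (isT : (1 <= 768)%N) Ha) (fun m => Pdist HK m setT)
  (family_common_prior HK (proj1 Hk)).
pose j := trunc_log 2 k.
have [mm Hmm] := @long_codeword_message _ (fun m r => E m a r (P_mS k m setT)) (j + j)
  (leq_addl (k ^ 2) 1) (pow2_double_trunc_log (k_pos HK)) Hinj.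
have [Q HQ] := family_member HK mm.
exists (P_mS k mm setT), Q; split => //.
apply: (@exp_len_ge_message _ _ _ mm (j + j)).
have -> : P_mS k mm setT mm = 1 - / log2 (INR k) by rewrite /P_mS eqxx.
apply: final_estimate (log2k_ge8 HK) _.
apply: Rle_trans Hmm; rewrite plus_INR /j.
by have := log2_lt_trunc_log (k_pos HK); lra.
Qed.
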